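(* Let $(X,\mathcal{E})$ be an unbounded discrete ballean that is relatively maximal, and let $p,q$ be distinct ultrafilters from $X^\sharp$. Then $f^\beta(p)\neq q$ for every map $f:X\to X$ such that for every bounded set $B$ of $(X,\mathcal{E})$ both $f(B)$ and $f^{-1}(B)$ are bounded.
   Context: A ballean $(X,\mathcal{E})$ is a set with a coarse structure. $E[x]=\{y:(x,y)\in E\}$. $Y$ is bounded if $Y\subseteq E[x]$ for some $x$ and $E\in\mathcal{E}$. The ballean is discrete if for every $E\in\mathcal{E}$ there is a bounded $B$ with $E[x]=\{x\}$ for all $x\in X\setminus B$. $X^\sharp$ is the set of ultrafilters on $X$ all of whose members are unbounded. For $f:X\to X$, $f^\beta(p)$ denotes the ultrafilter generated by $\{f(P):P\in p\}$. A ballean is relatively maximal if $\mathcal{E}$ is the largest coarse structure on $X$ whose bounded sets are exactly the bounded sets of $(X,\mathcal{E})$. *)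

From Stdlib Require Import Classical FunctionalExtensionality PropExtensionality.

Set Implicit Arguments.

Definition rel (X : Type) := X -> X -> Prop.

Definition coarse_structure (X : Type) (CE : rel X -> Prop) : Prop :=
  CE (fun x y => x = y) /\
  (forall E, CE E -> forall x, E x x) /\
  (forall E F, CE E -> CE F -> CE (fun x z => exists y, E x y /\ F y z)) /\
  (forall E, CE E -> CE (fun x y => E y x)) /\
  (forall E E', CE E -> (forall x, E' x x) -> (forall x y, E' x y -> E x y) -> CE E') /\
  (forall x y, exists E, CE E /\ E x y).

Definition bounded (X : Type) (CE : rel X -> Prop) (Y : X -> Prop) : Prop :=
  exists (x : X) (E : rel X), CE E /\ (forall y, Y y -> E x y).

Definition unbounded_ballean (X : Type) (CE : rel X -> Prop) : Prop :=
  ~ bounded CE (fun _ => True).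

Definition discrete_ballean (X : Type) (CE : rel X -> Prop) : Prop :=
  forall E, CE E -> exists B, bounded CE B /\
    forall x, ~ B x -> forall y, E x y <-> y = x.

Definition relatively_maximal (X : Type) (CE : rel X -> Prop) : Prop :=
  forall CE', coarse_structure CE' ->
    (forall Y, bounded CE' Y <-> bounded CE Y) ->
    forall E, CE' E -> CE E.

Definition ultrafilter (X : Type) (p : (X -> Prop) -> Prop) : Prop :=
  p (fun _ => True) /\
  ~ p (fun _ => False) /\
  (forall A B, p A -> (forall x, A x -> B x) -> p B) /\
  (forall A B, p A -> p B -> p (fun x => A x /\ B x)) /\
  (forall A, p A \/ p (fun x => ~ A x)).

Definition sharp (X : Type) (CE : rel X -> Prop) (p : (X -> Prop) -> Prop) : Prop :=
  ultrafilter p /\ forall P, p P -> ~ bounded CE P.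

Definition image (X : Type) (f : X -> X) (P : X -> Prop) : X -> Prop :=
  fun y => exists x, P x /\ f x = y.

Definition preimage (X : Type) (f : X -> X) (B : X -> Prop) : X -> Prop :=
  fun x => B (f x).

Definition fbeta (X : Type) (f : X -> X) (p : (X -> Prop) -> Prop) : (X -> Prop) -> Prop :=
  fun A => exists P, p P /\ forall y, image f P y -> A y.

(* A relation E whose images E[B] and E^-1[B] of bounded sets are bounded is
   an entourage of the coarse structure consisting of all such relations, and
   that coarse structure has the same bounded sets as CE; relative maximality
   therefore puts every such E into CE.  The symmetrised graph of f is one, so
   by discreteness f is the identity off a bounded set B.  A sharp ultrafilter
   p contains the complement of B, on which f is the identity, so f^beta(p)
   contains p and hence equals p by maximality. *)
From Stdlib Require Import FunctionalExtensionality PropExtensionality.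
Set Implicit Arguments.

Definition rel_image (X : Type) (E : rel X) (B : X -> Prop) : X -> Prop :=
  fun y => exists x, B x /\ E x y.

Definition rel_inv (X : Type) (E : rel X) : rel X := fun x y => E y x.

Section Bounded.
Variable X : Type.
Variable CE : rel X -> Prop.
Hypothesis HCE : coarse_structure CE.

Lemma bounded_sub (A B : X -> Prop) :
  bounded CE B -> (forall x, A x -> B x) -> bounded CE A.
Proof. intros [x [E [HE HB]]] HAB. exists x, E. split; auto. Qed.

Lemma bounded_singleton (x : X) : bounded CE (fun y => y = x).
Proof.
  destruct HCE as [Hdiag _].
  exists x, (fun a b => a = b). split; auto.
Qed.

Lemma bounded_rel_image (E : rel X) (B : X -> Prop) :
  CE E -> bounded CE B -> bounded CE (rel_image E B).
Proof.
  destruct HCE as [_ [_ [Hcomp _]]].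
  intros HE [x0 [E0 [HE0 HB]]].
  exists x0, (fun x z => exists y, E0 x y /\ E y z). split; [auto|].
  intros y [x [Bx Exy]]. exists x. auto.
Qed.

Lemma bounded_union (A B : X -> Prop) :
  bounded CE A -> bounded CE B -> bounded CE (fun x => A x \/ B x).
Proof.
  destruct HCE as [_ [Hrefl [Hcomp [_ [_ Hconn]]]]].
  intros [x1 [E1 [HE1 HA]]] [x2 [E2 [HE2 HB]]].
  destruct (Hconn x1 x2) as [E3 [HE3 H3]].
  exists x1, (fun x z => exists y, E1 x y /\ exists w, E3 y w /\ E2 w z).
  split; [apply Hcomp; auto|].
  intros y [Ay | By].
  - exists y. split; auto. exists y. split; apply Hrefl; auto.
  - exists x1. split; [apply Hrefl; auto|]. exists x2. auto.
Qed.

Definition bounded_preserving (E : rel X) : Prop :=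
  (forall x, E x x) /\
  forall B, bounded CE B ->
    bounded CE (rel_image E B) /\ bounded CE (rel_image (rel_inv E) B).

Lemma entourage_bounded_preserving (E : rel X) : CE E -> bounded_preserving E.
Proof.
  destruct HCE as [_ [Hrefl [_ [Hinv _]]]].
  intros HE. split; [apply Hrefl; auto|].
  intros B HB. split; apply bounded_rel_image; auto.
Qed.

Lemma coarse_structure_bounded_preserving : coarse_structure bounded_preserving.
Proof.
  destruct HCE as [Hdiag [_ [_ [_ [_ Hconn]]]]].
  split; [apply entourage_bounded_preserving; auto|].
  split; [intros E [HEr _]; exact HEr|].
  split.
  { intros E F [HEr HE] [HFr HF]. split; [intros x; exists x; auto|].
    intros B HB. split.
    - apply bounded_sub with (rel_image F (rel_image E B)).
      + exact (proj1 (HF _ (proj1 (HE _ HB)))).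
      + intros z [x [Bx [y [Exy Fyz]]]]. exists y. split; [exists x|]; auto.
    - apply bounded_sub with (rel_image (rel_inv E) (rel_image (rel_inv F) B)).
      + exact (proj2 (HE _ (proj2 (HF _ HB)))).
      + intros z [x [Bx [y [Ezy Fyx]]]]. exists y. split; [exists x|]; auto. }
  split.
  { intros E [HEr HE]. split; [auto|].
    intros B HB. destruct (HE B HB). split; auto. }
  split.
  { intros E E' [_ HE] HE'r Hsub. split; [auto|].
    intros B HB. destruct (HE B HB) as [Himg Hinv].
    split.
    - apply bounded_sub with (rel_image E B); auto.
      intros y [x [Bx Exy]]. exists x. auto.
    - apply bounded_sub with (rel_image (rel_inv E) B); auto.
      intros y [x [Bx Eyx]]. exists x. split; [|apply Hsub]; auto. }
  intros x y. destruct (Hconn x y) as [E [HE Exy]].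
  exists E. split; [apply entourage_bounded_preserving|]; auto.
Qed.

Lemma bounded_bounded_preserving_iff (Y : X -> Prop) :
  bounded bounded_preserving Y <-> bounded CE Y.
Proof.
  split.
  - intros [x [E [[_ HE] HY]]].
    apply bounded_sub with (rel_image E (fun y => y = x)).
    + exact (proj1 (HE _ (bounded_singleton x))).
    + intros y Yy. exists x. auto.
  - intros [x [E [HE HY]]]. exists x, E. split; [apply entourage_bounded_preserving|]; auto.
Qed.

Lemma relatively_maximal_bounded_preserving (E : rel X) :
  relatively_maximal CE -> bounded_preserving E -> CE E.
Proof.
  intros Hmax. apply Hmax.
  - exact coarse_structure_bounded_preserving.
  - exact bounded_bounded_preserving_iff.
Qed.

Definition sym_graph (f : X -> X) : rel X :=
  fun x y => x = y \/ y = f x \/ x = f y.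

Lemma bounded_preserving_sym_graph (f : X -> X) :
  (forall B, bounded CE B -> bounded CE (image f B) /\ bounded CE (preimage f B)) ->
  bounded_preserving (sym_graph f).
Proof.
  intros Hf. split; [intros x; left; auto|].
  intros B HB. destruct (Hf B HB) as [Himg Hpre].
  assert (HU : bounded CE (fun y => (B y \/ image f B y) \/ preimage f B y)).
  { apply bounded_union; auto. apply bounded_union; auto. }
  split; apply bounded_sub with (1 := HU);
    intros y [x [Bx [Heq | [Heq | Heq]]]]; subst;
    first [ left; left; assumption
          | right; assumption
          | left; right; exists x; auto ].
Qed.

Lemma discrete_fixed_off_bounded (f : X -> X) :
  discrete_ballean CE -> CE (sym_graph f) ->
  exists B, bounded CE B /\ forall x, ~ B x -> f x = x.
Proof.
  intros Hdisc HG. destruct (Hdisc _ HG) as [B [HB Hdiag]].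
  exists B. split; [auto|].
  intros x Bx. apply (Hdiag x Bx (f x)). right; left; auto.
Qed.

Lemma sharp_compl_bounded (p : (X -> Prop) -> Prop) (B : X -> Prop) :
  sharp CE p -> bounded CE B -> p (fun x => ~ B x).
Proof.
  intros [[_ [_ [_ [_ Hcompl]]]] Hunb] HB.
  destruct (Hcompl B) as [HpB | HpnB]; [|auto].
  exfalso. exact (Hunb B HpB HB).
Qed.

End Bounded.

Section Ultrafilters.
Variable X : Type.

Lemma fbeta_fixed_on (f : X -> X) (p : (X -> Prop) -> Prop) (C : X -> Prop) :
  ultrafilter p -> p C -> (forall x, C x -> f x = x) ->
  forall P, p P -> fbeta f p P.
Proof.
  intros [_ [_ [_ [Hmeet _]]]] HC Hfix P HP.
  exists (fun x => P x /\ C x). split; [apply Hmeet; auto|].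
  intros y [x [[Px Cx] <-]]. rewrite Hfix; auto.
Qed.

Lemma ultrafilter_incl_eq (p q : (X -> Prop) -> Prop) :
  ultrafilter p -> ultrafilter q -> (forall P, p P -> q P) -> p = q.
Proof.
  intros [_ [_ [_ [_ Hpcompl]]]] [_ [Hq0 [Hqup [Hqmeet _]]]] Hpq.
  extensionality A. apply propositional_extensionality. split; [auto|].
  intros HqA. destruct (Hpcompl A) as [HpA | HpnA]; [auto|].
  exfalso. apply Hq0.
  apply Hqup with (fun x => A x /\ ~ A x); [apply Hqmeet; auto|].
  intros x [Ax nAx]. auto.
Qed.

End Ultrafilters.

Theorem proposition3 (X : Type) (CE : rel X -> Prop)
  (HCE : coarse_structure CE)
  (Hunb : unbounded_ballean CE)
  (Hdisc : discrete_ballean CE)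
  (Hmax : relatively_maximal CE)
  (p q : (X -> Prop) -> Prop)
  (Hp : sharp CE p) (Hq : sharp CE q) (Hpq : p <> q) :
  forall f : X -> X,
    (forall B, bounded CE B ->
       bounded CE (image f B) /\ bounded CE (preimage f B)) ->
    fbeta f p <> q.
Proof.
  intros f Hf Hfpq.
  assert (HG : CE (sym_graph f)).
  { apply relatively_maximal_bounded_preserving; auto.
    apply bounded_preserving_sym_graph; auto. }
  destruct (discrete_fixed_off_bounded f Hdisc HG) as [B [HB Hfix]].
  apply Hpq, ultrafilter_incl_eq; [exact (proj1 Hp) | exact (proj1 Hq) |].
  rewrite <- Hfpq.
  apply fbeta_fixed_on with (fun x => ~ B x); auto.
  - exact (proj1 Hp).
  - apply sharp_compl_bounded with CE; auto.
Qed.
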